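(* Let $f,g,\ell$ be nonnegative integers, $\mathcal{F}\in\mathbb{R}^{\alpha_1\times\cdots\times\alpha_{f+\ell}}$, $\mathcal{G}\in\mathbb{R}^{\beta_1\times\cdots\times\beta_{g+\ell}}$, $\mathbf{p},\mathbf{q}$ permutations of $1:f+\ell$ and $1:g+\ell$, and $\mathbf{r}=\mathbf{p}(1:f)$, $\boldsymbol{\lambda}=\mathbf{p}(f+1:f+\ell)$, $\boldsymbol{\psi}=\mathbf{q}(1:\ell)$, $\mathbf{c}=\mathbf{q}(\ell+1:\ell+g)$, with $\boldsymbol{\alpha}(\boldsymbol{\lambda})=\boldsymbol{\beta}(\boldsymbol{\psi})$. Let $\mathcal{H}\in\mathbb{R}^{\alpha_{r_1}\times\cdots\times\alpha_{r_f}\times\beta_{c_1}\times\cdots\times\beta_{c_g}}$ be given by $\mathcal{H}(\mathbf{i},\mathbf{j})=\sum_{\mathbf{k}=\mathbf{1}}^{\boldsymbol{\alpha}(\boldsymbol{\lambda})}\mathcal{F}^{<\mathbf{p}>}(\mathbf{i},\mathbf{k})\,\mathcal{G}^{<\mathbf{q}>}(\mathbf{k},\mathbf{j})$ for $\mathbf{1}\le\mathbf{i}\le\boldsymbol{\alpha}(\mathbf{r})$, $\mathbf{1}\le\mathbf{j}\le\boldsymbol{\beta}(\mathbf{c})$. Let $\mathbf{S}=\{\mathbf{s}^{(1)},\ldots,\mathbf{s}^{(f+\ell)}\}$ be a blocking of $\mathcal{F}$ and set $\mathbf{R}=\{\mathbf{s}^{(r_1)},\ldots,\mathbf{s}^{(r_f)}\}$,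 $\boldsymbol{\Lambda}=\{\mathbf{s}^{(\lambda_1)},\ldots,\mathbf{s}^{(\lambda_\ell)}\}$. Let $\mathbf{T}=\{\mathbf{t}^{(1)},\ldots,\mathbf{t}^{(g+\ell)}\}$ be a blocking of $\mathcal{G}$ and set $\boldsymbol{\Psi}=\{\mathbf{t}^{(\psi_1)},\ldots,\mathbf{t}^{(\psi_\ell)}\}$, $\mathbf{C}=\{\mathbf{t}^{(c_1)},\ldots,\mathbf{t}^{(c_g)}\}$. If $\mathbf{s}^{(\lambda_k)}=\mathbf{t}^{(\psi_k)}$ for $k=1,\ldots,\ell$, then, regarding $\mathcal{H}$ as blocked by $\mathbf{R}$ in modes $1$ through $f$ and by $\mathbf{C}$ in modes $f+1$ through $f+g$ (so that $\mathbf{R}$ is a blocking for modes $1,\ldots,f$ of $\mathcal{H}$ and $\mathbf{C}$ a blocking for modes $f+1,\ldots,f+g$), \[ \mathcal{H}_{\mathbf{R}\times\mathbf{C}}=\mathcal{F}_{\mathbf{R}\times\boldsymbol{\Lambda}}\cdot\mathcal{G}_{\boldsymbol{\Psi}\times\mathbf{C}}, \] where $\mathcal{F}_{\mathbf{R}\times\boldsymbol{\Lambda}}=P_{\mathbf{R}}\mathcal{F}_{\mathbf{r}\times\boldsymbol{\lambda}}P_{\boldsymbol{\Lambda}}^T$, $\mathcal{G}_{\boldsymbol{\Psi}\times\mathbf{C}}=P_{\boldsymbol{\Psi}}\mathcal{G}_{\boldsymbol{\psi}\times\mathbf{c}}P_{\mathbf{C}}^T$, and $\mathcal{H}_{\m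athbf{R}\times\mathbf{C}}=P_{\mathbf{R}}\mathcal{H}_{[1:f]\times[f+1:f+g]}P_{\mathbf{C}}^T$.
   Context: For an integer vector $\mathbf{v}$ and index vector $\mathbf{s}$, $\mathbf{v}(\mathbf{s})=(v_{s_1},v_{s_2},\ldots)$; index inequalities are componentwise; $\sum_{\mathbf{k}=\mathbf{1}}^{\mathbf{n}}$ is the nested sum over all $\mathbf{1}\le\mathbf{k}\le\mathbf{n}$. $\mathrm{ivec}(\mathbf{i},\mathbf{n})=i_1+(i_2-1)n_1+\cdots+(i_d-1)n_1\cdots n_{d-1}$; $\mathrm{vec}(\mathcal{X})$ has entry $\mathrm{ivec}(\mathbf{i},\mathbf{n})$ equal to $\mathcal{X}(\mathbf{i})$. The $\mathbf{p}$-transpose is $\mathcal{X}^{<\mathbf{p}>}(i_{p_1},\ldots,i_{p_d})=\mathcal{X}(i_1,\ldots,i_d)$. For $\mathbf{r}=\mathbf{p}(1:e)$, $\mathbf{c}=\mathbf{p}(e+1:d)$ ($0\le e\le d$), the unfolding $\mathcal{X}_{\mathbf{r}\times\mathbf{c}}$ is the matrix with $(\alpha,\beta)$ entry $\mathcal{X}^{<\mathbf{p}>}(i_1,\ldots,i_e,j_1,\ldots,j_{d-e})$, $\alpha=\mathrm{ivec}(\mathbf{i},\mathbf{n}(\mathbf{r}))$, $\beta=\mathrm{ivec}(\mathbf{j},\mathbf{n}(\mathbf{c}))$ (a column vector $\mathrm{vec}(\mathcal{X}^{<\mathbf{p}>})$ if $\mathbf{c}=\emptyset$, a row vector $\mathrm{vec}(\mathcal{X}^{<\mathbf{p}>})^T$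 if $\mathbf{r}=\emptyset$). A blocking of a tensor in $\mathbb{R}^{n_1\times\cdots\times n_d}$ is a collection $\{\mathbf{m}^{(1)},\ldots,\mathbf{m}^{(d)}\}$, each $\mathbf{m}^{(k)}=[m^{(k)}_1,\ldots,m^{(k)}_{b_k}]$ a vector of positive integers summing to $n_k$; block $\mathbf{i}$ ($\mathbf{1}\le\mathbf{i}\le\mathbf{b}$) is the subtensor with index ranges $m^{(k)}_1+\cdots+m^{(k)}_{i_k-1}+1:m^{(k)}_1+\cdots+m^{(k)}_{i_k}$ in mode $k$; $\mathrm{vec}_{\mathbf{M}}(\mathcal{X})$ stacks the vecs of the blocks in order of increasing $\mathrm{ivec}(\mathbf{i},\mathbf{b})$. For a blocking $\mathbf{K}$ of tensors of some size $\mathbf{n}$, $P_{\mathbf{K}}$ denotes the unique permutation matrix with $P_{\mathbf{K}}\mathrm{vec}(\mathcal{X})=\mathrm{vec}_{\mathbf{K}}(\mathcal{X})$ for all tensors $\mathcal{X}$ of size $\mathbf{n}$; here $P_{\mathbf{R}}$, $P_{\boldsymbol{\Lambda}}$, $P_{\boldsymbol{\Psi}}$, $P_{\mathbf{C}}$ refer to tensors of sizes $\boldsymbol{\alpha}(\mathbf{r})$, $\boldsymbol{\alpha}(\boldsymbol{\lambda})$, $\boldsymbol{\beta}(\boldsymbol{\psi})$, $\boldsymbol{\beta}(\mathbf{c})$ respectively. *)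

(* CONVENTIONS: all indices are 0-based (paper index i corresponds to i-1 here);
   a multi-index / size vector is a seq nat; a tensor of order d and size n is a
   function X : seq nat -> R, only its values on in-range indices matter. *)
From HB Require Import structures.
From mathcomp Require Import all_boot all_order all_algebra.
From mathcomp Require Import fingroup perm.
From mathcomp Require Import reals.
From mathcomp Require Import zify.
Set Implicit Arguments. Unset Strict Implicit. Unset Printing Implicit Defensive.
Import GRing.Theory.
Local Open Scope ring_scope.

Definition tensor (R : Type) := seq nat -> R.

Definition prodn (n : seq nat) : nat := (\prod_(x <- n) x)%N.

Fixpoint ivec (i n : seq nat) : nat :=
  match i, n with
  | x :: i', m :: n' => (x + m * ivec i' n')%N
  | _, _ => 0%N
  end.

Fixpoint unvec (a : nat) (n : seq nat) : seq nat :=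
  match n with
  | [::] => [::]
  | m :: n' => (a %% m)%N :: unvec (a %/ m)%N n'
  end.

Fixpoint indices (n : seq nat) : seq (seq nat) :=
  match n with
  | [::] => [:: [::]]
  | m :: n' => [seq x :: y | x <- iota 0 m, y <- indices n']
  end.

Definition pseq d (p : 'S_d) : seq nat := [seq val (p k) | k <- enum 'I_d].

Definition sub T (x0 : T) (v : seq T) (s : seq nat) : seq T := [seq nth x0 v k | k <- s].

Section Tensors.
Variable R : nzRingType.

(* p-transpose: X^<p>(i_{p_1},...,i_{p_d}) = X(i_1,...,i_d),
   i.e. X^<p>(j) = X(i) with i_m = j_{p^{-1}(m)} *)
Definition ptrans d (p : 'S_d) (X : tensor R) : tensor R :=
  fun j => X [seq nth 0%N j (val ((p^-1)%g m)) | m <- enum 'I_d].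

(* unfolding X_{r x c} with r = p(1:e), c = p(e+1:d), for X of size n *)
Definition unf d (n : seq nat) (p : 'S_d) (e : nat) (X : tensor R) :
  'M[R]_(prodn (sub 0%N n (take e (pseq p))), prodn (sub 0%N n (drop e (pseq p)))) :=
  \matrix_(a, b) ptrans p X (unvec a (sub 0%N n (take e (pseq p)))
                             ++ unvec b (sub 0%N n (drop e (pseq p)))).

Definition is_blocking (K : seq (seq nat)) (n : seq nat) : Prop :=
  map sumn K = n /\ all (all (fun m => 0 < m)%N) K.

Fixpoint blk (s : seq nat) (x : nat) : nat * nat :=
  match s with
  | [::] => (0%N, x)
  | m :: s' => if (x < m)%N then (0%N, x)
               else let bo := blk s' (x - m) in (bo.1.+1, bo.2)
  end.

Definition blk_index (K : seq (seq nat)) (x : seq nat) : seq nat :=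
  [seq (blk (nth [::] K k) (nth 0%N x k)).1 | k <- iota 0 (size K)].
Definition blk_offset (K : seq (seq nat)) (x : seq nat) : seq nat :=
  [seq (blk (nth [::] K k) (nth 0%N x k)).2 | k <- iota 0 (size K)].
Definition nblocks (K : seq (seq nat)) : seq nat := map size K.
Definition blk_size (K : seq (seq nat)) (i : seq nat) : seq nat :=
  [seq nth 0%N (nth [::] K k) (nth 0%N i k) | k <- iota 0 (size K)].

(* position in vec_K(X) of the entry X(x): vec_K stacks the vecs of the blocks in
   order of increasing ivec(i,b); so it is the total length of the blocks
   preceding block i plus the position ivec(offset, size of block i) of x inside
   its block. *)
Definition blkpos (K : seq (seq nat)) (x : seq nat) : nat :=
  ((\sum_(a < ivec (blk_index K x) (nblocks K))
      prodn (blk_size K (unvec a (nblocks K))))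
   + ivec (blk_offset K x) (blk_size K (blk_index K x)))%N.

(* P_K: the permutation matrix with P_K vec(X) = vec_K(X) for tensors of size n:
   entry (a,b) is 1 iff the b-th entry of vec(X) is the a-th entry of vec_K(X). *)
Definition Pblk (K : seq (seq nat)) (n : seq nat) : 'M[R]_(prodn n) :=
  \matrix_(a, b) (blkpos K (unvec b n) == a)%:R.

End Tensors.

Lemma pseq1 n : pseq (1%g : 'S_n) = iota 0 n.
Proof.
rewrite /pseq -val_enum_ord; apply: eq_map => k; by rewrite perm1.
Qed.

Lemma sub_cat_take f g (n1 n2 : seq nat) :
  size n1 = f -> sub 0%N (n1 ++ n2) (take f (pseq (1%g : 'S_(f + g)))) = n1.
Proof.
move=> s1; rewrite pseq1 take_iota minnC /minn ltnNge leq_addr /=.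
apply: (@eq_from_nth _ 0%N); first by rewrite size_map size_iota.
move=> k; rewrite size_map size_iota => kf.
by rewrite (nth_map 0%N) ?size_iota // nth_iota // ?add0n nth_cat s1 kf.
Qed.

Lemma sub_cat_drop f g (n1 n2 : seq nat) :
  size n1 = f -> size n2 = g ->
  sub 0%N (n1 ++ n2) (drop f (pseq (1%g : 'S_(f + g)))) = n2.
Proof.
move=> s1 s2; rewrite pseq1 drop_iota add0n addKn.
apply: (@eq_from_nth _ 0%N); first by rewrite size_map size_iota.
move=> k; rewrite size_map size_iota => kg.
rewrite (nth_map 0%N) ?size_iota // nth_iota // ?add0n nth_cat s1.
by rewrite ltnNge leq_addr /= addKn.
Qed.

Lemma size_sub_take d f (n : seq nat) (p : 'S_(f + d)) :
  size (sub 0%N n (take f (pseq p))) = f.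
Proof. rewrite size_map size_take size_map size_enum_ord; case: ifP => //; lia. Qed.

Lemma size_sub_drop d f (n : seq nat) (p : 'S_(f + d)) :
  size (sub 0%N n (drop f (pseq p))) = d.
Proof. by rewrite size_map size_drop size_map size_enum_ord addKn. Qed.

From HB Require Import structures.
From mathcomp Require Import all_boot all_order all_algebra.
From mathcomp Require Import fingroup perm.
From mathcomp Require Import reals.
From mathcomp Require Import zify.
Set Implicit Arguments. Unset Strict Implicit. Unset Printing Implicit Defensive.
Import GRing.Theory.

(* Unfolding commutes with contraction: entry (ivec i, ivec j) of the unfolding
   of H is a sum over the multi-indices k < alpha(lambda), and since ivec/unvec
   enumerate those bijectively it is the (ivec i, ivec j) entry of the product of
   the unfoldings of F and G.  A block reordering P_K is a permutation matrix
   (the block position of an entry is a bijection onto [0, prod n)), so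
   P_Lambda^T P_Psi = I once Lambda = Psi, and the blocked identity follows by
   conjugating the unblocked one with P_R and P_C. *)

Lemma all2_nthP (r : rel nat) (s t : seq nat) :
  reflect (size s = size t /\ forall k, k < size s -> r (nth 0 s k) (nth 0 t k))
          (all2 r s t).
Proof.
elim: s t => [|x s IH] [|y t] /=; [by constructor | by constructor; case.. |].
apply: (iffP andP) => [[rxy /IH [st rst]] | [[st] rst]].
  by split=> [|[|k] /= kst]; rewrite ?st //; apply: rst.
split; first exact: (rst 0).
by apply/IH; split=> // k ks; apply: (rst k.+1).
Qed.

Lemma prodn_cons m n : prodn (m :: n) = m * prodn n.
Proof. by rewrite /prodn big_cons. Qed.

Lemma size_unvec a n : size (unvec a n) = size n.
Proof. by elim: n a => //= m n IH a; rewrite IH. Qed.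

Lemma unvec_lt a n : a < prodn n -> all2 ltn (unvec a n) n.
Proof.
elim: n a => //= m n IH a; rewrite prodn_cons => an.
have m_gt0 : 0 < m by case: m an.
by rewrite ltn_pmod //= IH // ltn_divLR // mulnC.
Qed.

Lemma unvecK a n : a < prodn n -> ivec (unvec a n) n = a.
Proof.
elim: n a => [|m n IH] a /=; first by rewrite /prodn big_nil; case: a.
rewrite prodn_cons => an.
have m_gt0 : 0 < m by case: m an.
by rewrite IH ?ltn_divLR // 1?mulnC // addnC -divn_eq.
Qed.

Lemma ivecK i n : all2 ltn i n -> unvec (ivec i n) n = i.
Proof.
elim: n i => [|m n IH] [|x i] //= /andP[xm i_lt].
rewrite addnC mulnC modnMDl modn_small // divnMDl ?(leq_ltn_trans _ xm) //.
by rewrite divn_small // addn0 IH.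
Qed.

Lemma ivec_lt i n : all2 ltn i n -> ivec i n < prodn n.
Proof.
elim: n i => [|m n IH] [|x i] //=; first by rewrite /prodn big_nil.
move=> /andP[xm /IH]; rewrite prodn_cons; nia.
Qed.

Lemma mem_indices i n : all2 ltn i n -> i \in indices n.
Proof.
elim: n i => [|m n IH] [|x i] //= /andP[xm i_lt].
by apply: (allpairs_f_dep (fun x y => x :: y)); rewrite ?mem_iota //= IH.
Qed.

Lemma big_ord_mul_divmod (T : Type) (idx : T) (op : Monoid.com_law idx)
    m N (F : nat -> nat -> T) :
  \big[op/idx]_(c < m * N) F (c %% m) (c %/ m) =
  \big[op/idx]_(c < N) \big[op/idx]_(x < m) F x c.
Proof.
elim: N => [|N IH]; first by rewrite muln0 !big_ord0.
rewrite big_ord_recr /= -IH.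
rewrite -!(big_mkord xpredT (fun c => F (c %% m) (c %/ m))).
rewrite -(big_mkord xpredT (F ^~ N)) mulnS addnC.
rewrite (big_cat_nat _ (leq_addr m (m * N))) //=; congr (op _ _).
rewrite -{1}(add0n (m * N)) big_addn addKn; apply: eq_big_nat => x /= xm.
rewrite addnC [m * N]mulnC divnMDl ?(leq_ltn_trans _ xm) //.
by rewrite divn_small // addn0 modnMDl modn_small.
Qed.

Lemma big_indices (T : Type) (idx : T) (op : Monoid.com_law idx) n
    (F : seq nat -> T) :
  \big[op/idx]_(k <- indices n) F k = \big[op/idx]_(c < prodn n) F (unvec c n).
Proof.
elim: n F => [|m n IH] F /=; first by rewrite big_seq1 /prodn big_nil big_ord1.
rewrite big_allpairs_dep prodn_cons.
rewrite (big_ord_mul_divmod op m (prodn n) (fun x c => F (x :: unvec c n))) /=.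
under eq_bigr do rewrite IH.
rewrite exchange_big /= -(big_mkord xpredT (fun j => \big[op/idx]_(c < _) F (j :: unvec c n))).
by rewrite /index_iota subn0.
Qed.

Lemma map_sumn_sub (K : seq (seq nat)) n s :
  map sumn K = n -> map sumn (sub [::] K s) = sub 0 n s.
Proof.
move=> blockingK; rewrite /sub -map_comp; apply: eq_map => k /=.
case: (ltnP k (size K)) => kK; first by rewrite -blockingK (nth_map [::]).
by rewrite !nth_default // -blockingK size_map.
Qed.

Lemma eq_sub (T : Type) (x0 : T) (u v : seq T) (s t : seq nat) :
  size s = size t ->
  (forall k, k < size s -> nth x0 u (nth 0 s k) = nth x0 v (nth 0 t k)) ->
  sub x0 u s = sub x0 v t.
Proof.
move=> st uv; apply: (@eq_from_nth _ x0) => [|k]; rewrite !size_map // => ks.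
by rewrite !(nth_map 0) -?st // uv.
Qed.

Lemma blk_decomp s x : x = sumn (take (blk s x).1 s) + (blk s x).2.
Proof.
elim: s x => [|m s IH] x //=; case: ifP => // xm /=.
by rewrite -addnA -IH subnKC // leqNgt xm.
Qed.

Lemma blk_lt s x : x < sumn s ->
  ((blk s x).1 < size s) && ((blk s x).2 < nth 0 s (blk s x).1).
Proof. by elim: s x => [|m s IH] x //=; case: ifP => //= xm xs; apply: IH; lia. Qed.

Lemma homo_interval_inj (F : nat -> nat) t1 t2 y : {homo F : a b / a <= b} ->
  F t1 <= y < F t1.+1 -> F t2 <= y < F t2.+1 -> t1 = t2.
Proof.
move=> Fmono /andP[lo1 hi1] /andP[lo2 hi2].
by case: (ltngtP t1 t2) => // lt; have := Fmono _ _ lt; lia.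
Qed.

Definition blk_start (K : seq (seq nat)) (t : nat) : nat :=
  \sum_(a < t) prodn (blk_size K (unvec a (nblocks K))).

Lemma blk_start_homo K : {homo blk_start K : t1 t2 / t1 <= t2}.
Proof.
move=> t1 t2 t12; rewrite /blk_start.
rewrite -!(big_mkord xpredT (fun a => prodn (blk_size K (unvec a (nblocks K))))).
by rewrite [X in _ <= X](big_cat_nat (leq0n t1) t12) leq_addr.
Qed.

Lemma blk_start_nblocks K :
  blk_start K (prodn (nblocks K)) = prodn (map sumn K).
Proof.
rewrite /blk_start -(big_indices _ _ (fun I => prodn (blk_size K I))).
elim: K => [|s K IH]; first by rewrite /= big_seq1 /blk_size /= /prodn big_nil.
rewrite /nblocks /= big_allpairs_dep /= !prodn_cons -IH sumnE [in RHS](big_nth 0).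
rewrite big_distrl /= /index_iota subn0; apply: eq_bigr => x _.
rewrite big_distrr /=; apply: eq_bigr => I _.
suff -> : blk_size (s :: K) (x :: I) = nth 0 s x :: blk_size K I by rewrite prodn_cons.
by rewrite /blk_size /= -[1]add0n (iotaDl 1 0) -map_comp.
Qed.

Section BlockPosition.
Variables (K : seq (seq nat)) (n : seq nat).
Hypothesis blockingK : map sumn K = n.

Lemma size_blocking : size K = size n.
Proof. by rewrite -blockingK size_map. Qed.

Lemma nth_blocking k : nth 0 n k = sumn (nth [::] K k).
Proof.
case: (ltnP k (size K)) => kK; first by rewrite -blockingK (nth_map [::]).
by rewrite !nth_default // -size_blocking.
Qed.

Lemma blk_index_offset_lt x : all2 ltn x n ->
  all2 ltn (blk_index K x) (nblocks K) &&
  all2 ltn (blk_offset K x) (blk_size K (blk_index K x)).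
Proof.
move=> /all2_nthP[sx x_lt]; apply/andP; split; apply/all2_nthP.
all: rewrite /blk_index /blk_offset /blk_size /nblocks !size_map size_iota.
all: split=> // k kK; rewrite !nth_mkseq // ?(nth_map [::]) //.
all: have /blk_lt/andP[] // : nth 0 x k < sumn (nth [::] K k).
all: by rewrite -nth_blocking; apply: x_lt; rewrite sx -size_blocking.
Qed.

Lemma blkpos_in_block x : all2 ltn x n ->
  let t := ivec (blk_index K x) (nblocks K) in
  blk_start K t <= blkpos K x < blk_start K t.+1.
Proof.
move=> x_lt /=; have /andP[ix ox] := blk_index_offset_lt x_lt.
rewrite /blkpos /blk_start leq_addr /= big_ord_recr /= ltn_add2l ivecK //.
exact: ivec_lt.
Qed.

Lemma blkpos_inj : {in [pred x | all2 ltn x n] &, injective (blkpos K)}.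
Proof.
move=> x y /= x_lt y_lt e.
have /andP[ix ox] := blk_index_offset_lt x_lt.
have /andP[iy oy] := blk_index_offset_lt y_lt.
have eI : blk_index K x = blk_index K y.
  rewrite -(ivecK ix) -(ivecK iy); congr unvec.
  apply: (homo_interval_inj (blk_start_homo K) (blkpos_in_block x_lt)).
  by rewrite e; apply: blkpos_in_block.
have eO : blk_offset K x = blk_offset K y.
  move: e; rewrite /blkpos eI => /addnI e.
  by rewrite -(ivecK ox) -(ivecK oy) eI e.
have [/all2_nthP[sx _] /all2_nthP[sy _]] := conj x_lt y_lt.
apply: (@eq_from_nth _ 0) => [|k kx]; first by rewrite sx sy.
have kK : k < size K by rewrite size_blocking -sx.
rewrite (blk_decomp (nth [::] K k) (nth 0 x k)) (blk_decomp (nth [::] K k) (nth 0 y k)).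
have := congr1 (nth 0 ^~ k) eI; rewrite /blk_index !nth_mkseq // => ->.
by have := congr1 (nth 0 ^~ k) eO; rewrite /blk_offset !nth_mkseq // => ->.
Qed.

Lemma blkpos_lt x : all2 ltn x n -> blkpos K x < prodn n.
Proof.
move=> x_lt; have /andP[ix _] := blk_index_offset_lt x_lt.
have /andP[_ /leq_trans] := blkpos_in_block x_lt; apply.
by rewrite -blockingK -blk_start_nblocks blk_start_homo // ivec_lt.
Qed.

Lemma blkpos_unvec_inj :
  injective (fun b : 'I_(prodn n) => blkpos K (unvec b n)).
Proof.
move=> b b' /blkpos_inj e; apply: ord_inj.
rewrite -(unvecK (ltn_ord b)) -(unvecK (ltn_ord b')) e //.
all: exact: unvec_lt.
Qed.

End BlockPosition.

Local Open Scope ring_scope.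

Lemma Pblk_trmx_mul (R : nzRingType) K n :
  map sumn K = n -> (Pblk R K n)^T *m Pblk R K n = 1%:M.
Proof.
move=> blockingK; apply/matrixP => b b'; rewrite !mxE.
have b_lt := unvec_lt (ltn_ord b).
rewrite (bigD1 (Ordinal (blkpos_lt blockingK b_lt))) //= big1 => [|a ne_a].
  by rewrite !mxE eqxx mul1r addr0 /= (inj_eq (blkpos_unvec_inj blockingK)) eq_sym.
rewrite !mxE; suff /negbTE -> : blkpos K (unvec b n) != a by rewrite mul0r.
by apply: contra ne_a => /eqP e; apply/eqP/val_inj.
Qed.

Lemma Pblk_cancel_castmx (R : nzRingType) (K : seq (seq nat)) (n1 n2 : seq nat)
    (e : prodn n2 = prodn n1) a b c
    (A : 'M[R]_(a, prodn n1)) (B : 'M[R]_(prodn n2, b)) (C : 'M[R]_(b, c)) :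
  map sumn K = n1 -> n1 = n2 ->
  A *m (Pblk R K n1)^T *m castmx (e, erefl) (Pblk R K n2 *m B *m C) =
  A *m castmx (e, erefl) B *m C.
Proof.
move=> blockingK n12; subst n2; rewrite (eq_irrelevance e erefl) !castmx_id.
by rewrite -!mulmxA (mulmxA _^T) Pblk_trmx_mul // mul1mx.
Qed.

Lemma ptrans1 (R : nzRingType) d (X : tensor R) j :
  size j = d -> ptrans (1%g : 'S_d) X j = X j.
Proof.
move=> <-; rewrite /ptrans; congr X.
rewrite -[RHS](mkseq_nth 0) /mkseq -val_enum_ord -map_comp.
by apply: eq_map => m /=; rewrite invg1 perm1.
Qed.

Lemma unf_contraction (R : nzRingType) (f g l : nat) (alpha beta : seq nat)
    (F G H : tensor R) (p : 'S_(f + l)) (q : 'S_(l + g))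
    (hlam : sub 0 alpha (drop f (pseq p)) = sub 0 beta (take l (pseq q)))
    (hH : forall i j, i \in indices (sub 0 alpha (take f (pseq p))) ->
                      j \in indices (sub 0 beta (drop l (pseq q))) ->
          H (i ++ j) = \sum_(k <- indices (sub 0 alpha (drop f (pseq p))))
                         ptrans p F (i ++ k) * ptrans q G (k ++ j)) :
  castmx (congr1 prodn (sub_cat_take g (sub 0 beta (drop l (pseq q)))
                          (size_sub_take alpha p)),
          congr1 prodn (sub_cat_drop (size_sub_take alpha p) (size_sub_drop beta q)))
    (unf (sub 0 alpha (take f (pseq p)) ++ sub 0 beta (drop l (pseq q)))
         (1%g : 'S_(f + g)) f H)
  = unf alpha p f F *m castmx (congr1 prodn (esym hlam), erefl) (unf beta q l G).
Proof.
apply/matrixP => a b; rewrite castmxE !mxE /=.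
rewrite sub_cat_take ?size_sub_take // sub_cat_drop ?size_sub_take ?size_sub_drop //.
rewrite ptrans1; last by rewrite size_cat !size_unvec size_sub_take size_sub_drop.
rewrite hH ?mem_indices ?unvec_lt // big_indices; apply: eq_bigr => c _.
rewrite !mxE castmxE !mxE /=.
by congr (_ * ptrans _ _ (unvec _ _ ++ _)); rewrite hlam.
Qed.

Theorem corollary4p2 (R : realType) (f g l : nat)
  (alpha beta : seq nat) (F G H : tensor R)
  (p : 'S_(f + l)) (q : 'S_(l + g))
  (S T : seq (seq nat))
  (Halpha : size alpha = (f + l)%N) (Hbeta : size beta = (g + l)%N)
  (hlam : sub 0%N alpha (drop f (pseq p)) = sub 0%N beta (take l (pseq q)))
  (hH : forall i j, i \in indices (sub 0%N alpha (take f (pseq p))) ->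
                    j \in indices (sub 0%N beta (drop l (pseq q))) ->
        H (i ++ j) = \sum_(k <- indices (sub 0%N alpha (drop f (pseq p))))
                       ptrans p F (i ++ k) * ptrans q G (k ++ j))
  (hS : is_blocking S alpha) (hT : is_blocking T beta)
  (hST : forall k, (k < l)%N ->
         nth [::] S (nth 0%N (drop f (pseq p)) k) = nth [::] T (nth 0%N (take l (pseq q)) k)) :
  let Rb := sub [::] S (take f (pseq p)) in
  let Lb := sub [::] S (drop f (pseq p)) in
  let Pb := sub [::] T (take l (pseq q)) in
  let Cb := sub [::] T (drop l (pseq q)) in
  Pblk R Rb (sub 0%N alpha (take f (pseq p)))
    *m castmx (congr1 prodn (sub_cat_take g (sub 0%N beta (drop l (pseq q)))
                               (size_sub_take alpha p)),
               congr1 prodn (sub_cat_drop (size_sub_take alpha p)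
                               (size_sub_drop beta q)))
        (unf (sub 0%N alpha (take f (pseq p)) ++ sub 0%N beta (drop l (pseq q)))
             (1%g : 'S_(f + g)) f H)
    *m (Pblk R Cb (sub 0%N beta (drop l (pseq q))))^T
  =
  (Pblk R Rb (sub 0%N alpha (take f (pseq p))) *m unf alpha p f F
     *m (Pblk R Lb (sub 0%N alpha (drop f (pseq p))))^T)
  *m castmx (congr1 prodn (esym hlam), erefl)
       (Pblk R Pb (sub 0%N beta (take l (pseq q))) *m unf beta q l G
          *m (Pblk R Cb (sub 0%N beta (drop l (pseq q))))^T).
Proof.
move=> Rb Lb Pb Cb.
have size_pseq d (r : 'S_d) : size (pseq r) = d by rewrite size_map size_enum_ord.
have eLP : Lb = Pb.
  have size_lam : size (drop f (pseq p)) = l by rewrite size_drop size_pseq addKn.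
  have size_psi : size (take l (pseq q)) = l by rewrite size_takel ?size_pseq ?leq_addr.
  by apply: eq_sub; rewrite ?size_lam ?size_psi.
rewrite eLP Pblk_cancel_castmx //; last by rewrite -eLP; apply: map_sumn_sub; case: hS.
by rewrite (unf_contraction hlam hH) mulmxA.
Qed.
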